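(* Let $\rho:\pi^*\to\mathbf U_n$ be a homomorphism and $\gamma\in\mathbf{SU}_n$, written up to conjugacy as $\gamma=\mathrm{diag}(e^{2\pi i\gamma_1},\dots,e^{2\pi i\gamma_n})$ with $0\le\gamma_j<1$. Then $\gamma$ is conjugate to $\widetilde\Psi(\rho)$ for some reducible $\rho$ if and only if there is a proper nonempty subcollection $\gamma_{\sigma(1)},\dots,\gamma_{\sigma(n_1)}$ ($1\le n_1<n$) with $\sum_{j=1}^{n_1}\gamma_{\sigma(j)}\in\mathbb Z$. Consequently, the set of critical values of $\Psi$ in $W=\mathbf{SU}_n/\mathrm{Ad}$ is a union of hyperplanes.
   Context: $F^*$ is a compact surface of genus $g\ge1$ with one boundary component, $\pi^*=\pi_1F^*$ free on $a_1,b_1,\dots,a_g,b_g$. $\widetilde\Psi:\mathrm{Hom}(\pi^*,\mathbf U_n)\cong\mathbf U_n^{2g}\to\mathbf{SU}_n$ is $\widetilde\Psi(A_1,B_1,\dots,A_g,B_g)=\prod_{i=1}^g[A_i,B_i]$, and $\Psi$ is the induced map on conjugacy classes. A representation $\rho$ is reducible if $\mathbb C^n$ has a proper nonzero $\rho(\pi^* )$-invariant subspace (equivalently, up to conjugacy $\mathrm{im}\rho\subset\mathbf U_{n_1}\times\mathbf U_{n_2}$ with $n_1+n_2=n$, $n_i\ge1$). The critical points of $\widetilde\Psi$ are exactly the reducible representations, and the critical values of $\Psi$ are the images of these. *)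

From HB Require Import structures.
From mathcomp Require Import all_boot all_order all_algebra.
From mathcomp Require Import all_classical all_reals all_analysis.
From mathcomp Require Import complex.
Set Implicit Arguments. Unset Strict Implicit. Unset Printing Implicit Defensive.
Import Order.TTheory GRing.Theory Num.Theory.
Local Open Scope ring_scope.
Local Open Scope complex_scope.

Definition adjmx (R : rcfType) (m n : nat) (A : 'M[complex R]_(m, n)) : 'M[complex R]_(n, m) :=
  (map_mx Num.conj A)^T.

Definition unitary (R : rcfType) (n : nat) (A : 'M[complex R]_n) : Prop :=
  A *m adjmx A = 1%:M.

Definition commmx (R : rcfType) (n : nat) (A B : 'M[complex R]_n) : 'M[complex R]_n :=
  A *m B *m invmx A *m invmx B.

(* A representation rho : pi^* -> U(n), pi^* free on a_1,b_1,...,a_g,b_g,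
   is given by the images A i = rho(a_(i+1)), B i = rho(b_(i+1)).
   Psi_tilde rho = prod_(i=1..g) [A_i, B_i] (ordered product). *)
Definition Psi_tilde (R : rcfType) (n g : nat) (A B : 'I_g -> 'M[complex R]_n) : 'M[complex R]_n :=
  \big[mulmx/1%:M]_(i < g) commmx (A i) (B i).

Definition is_rep (R : rcfType) (n g : nat) (A B : 'I_g -> 'M[complex R]_n) : Prop :=
  forall i, unitary (A i) /\ unitary (B i).

(* rho is reducible: some proper nonzero subspace V of C^n (row space of a
   matrix, row-vector convention) is invariant under all generators
   (hence under the whole image rho(pi^* )  ). *)
Definition reducible_rep (R : rcfType) (n g : nat) (A B : 'I_g -> 'M[complex R]_n) : Prop :=
  exists V : 'M[complex R]_n,
    (0 < \rank V)%N /\ (\rank V < n)%N /\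
    forall i, stablemx V (A i) /\ stablemx V (B i).

Definition diag_exp (R : realType) (n : nat) (gam : 'I_n -> R) : 'M[complex R]_n :=
  diag_mx (\row_j (cos (2 * pi * gam j) +i* sin (2 * pi * gam j))).

(* A representation with a proper invariant subspace V restricts to V, and
   there Psi_tilde is again a product of commutators, so it has determinant 1.
   Transporting V by the unitary conjugation, diag(e^{2 pi i gam_j}) acquires
   an invariant subspace of the same dimension on which its determinant is 1;
   that determinant is the product of the e^{2 pi i gam_j} over some subset of
   the indices, whence an integral partial sum.  Conversely, if the exponentials
   have product 1 on a set S and on its complement, a diagonal unitary D with
   D_(s j) = e^{2 pi i gam_j} D_j, where s cycles through S and through its
   complement separately, gives [P_s, D] = diag(e^{2 pi i gam_j}); the pair
   (P_s, D), completed by identities, is reducible since both preserve the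
   coordinate subspace of S. *)

From HB Require Import structures.
From mathcomp Require Import all_boot all_order all_algebra.
From mathcomp Require Import all_classical all_reals all_analysis.
From mathcomp Require Import complex.
From mathcomp Require Import ring perm.
Import Order.TTheory GRing.Theory Num.Theory.
Set Implicit Arguments.
Unset Strict Implicit.
Unset Printing Implicit Defensive.
Local Open Scope ring_scope.
Local Open Scope complex_scope.

Section Expi2pi.
Variable R : realType.

Definition expi2pi (x : R) : complex R := cos (2 * pi * x) +i* sin (2 * pi * x).

Lemma diag_expE n (gam : 'I_n -> R) :
  diag_exp gam = diag_mx (\row_j expi2pi (gam j)).
Proof. by []. Qed.

Lemma expi2pi0 : expi2pi 0 = 1.
Proof. by rewrite /expi2pi mulr0 cos0 sin0. Qed.

Lemma expi2piD x y : expi2pi (x + y) = expi2pi x * expi2pi y.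
Proof.
rewrite /expi2pi mulrDr cosD sinD.
by apply/eqP; rewrite eq_complex /=; apply/andP; split; apply/eqP; ring.
Qed.

Lemma expi2pi_sum (I : Type) (r : seq I) (P : pred I) (x : I -> R) :
  expi2pi (\sum_(i <- r | P i) x i) = \prod_(i <- r | P i) expi2pi (x i).
Proof. exact: (big_morph _ expi2piD expi2pi0). Qed.

Lemma expi2pi_conjK x : expi2pi x * (expi2pi x)^* = 1.
Proof.
rewrite /expi2pi; apply/eqP; rewrite eq_complex /=; apply/andP; split; apply/eqP.
  by rewrite mulrN opprK -!expr2 cos2Dsin2.
by rewrite mulrN mulrC addNr.
Qed.

Lemma cos_eq1_period (y : R) : 0 <= y < pi *+ 2 -> cos y = 1 -> y = 0.
Proof.
move=> /andP[y_ge0 y_lt2pi] cos_y.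
have pi_gt0 := @pi_gt0 R.
have [y_lepi|pi_lty] := leP y pi.
  by apply: cos_inj; rewrite ?in_itv /= ?y_ge0 ?y_lepi ?lexx ?ltW // cos_y cos0.
(* on [pi, 2 pi) reflect through 2 pi, where cos is again injective *)
have z_gt0 : 0 < pi *+ 2 - y by rewrite subr_gt0.
have z_ltpi : pi *+ 2 - y < pi by rewrite mulr2n -addrA gtrDl subr_lt0.
have : cos (pi *+ 2 - y) = cos 0 by rewrite addrC cosD2pi cosN cos_y cos0.
move/cos_inj; rewrite !in_itv /= lexx (ltW z_gt0) (ltW z_ltpi) (ltW pi_gt0).
by move=> /(_ isT isT) z0; move: z_gt0; rewrite z0 ltxx.
Qed.

Lemma expi2pi_nat (m : nat) : expi2pi m%:R = 1.
Proof.
rewrite /expi2pi.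
have -> : 2 * pi * m%:R = 0 + (pi *+ 2) *+ m :> R by rewrite add0r mulr_natr mulr_natl.
by rewrite (periodicn (@cosD2pi R)) (periodicn (@sinD2pi R)) cos0 sin0.
Qed.

Lemma expi2pi_int (m : int) : expi2pi m%:~R = 1.
Proof.
case: m => m; first exact: expi2pi_nat.
have : expi2pi (- m.+1%:R) * expi2pi m.+1%:R = 1 by rewrite -expi2piD addNr expi2pi0.
by rewrite expi2pi_nat mulr1 NegzE mulrNz.
Qed.

Lemma expi2pi_eq1 x : (expi2pi x == 1) = (x \is a Num.int).
Proof.
apply/eqP/idP => [ex|/intrP[m ->]]; last exact: expi2pi_int.
set m := Num.floor x.
have /andP[frac_ge0 frac_lt1] : 0 <= x - m%:~R < 1.
  move: (Num.Theory.floor_itv x); rewrite -/m intrD => /andP[mx xm].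
  by rewrite subr_ge0 mx ltrBlDl.
have : 2 * pi * (x - m%:~R) = 0.
  apply: cos_eq1_period.
    rewrite !mulr_ge0 ?pi_ge0 //=.
    by rewrite -(mulr_natl pi 2) -[X in _ < X]mulr1 ltr_pM2l // mulr_gt0 ?pi_gt0.
  have : expi2pi (x - m%:~R) = 1 by rewrite expi2piD -mulrNz expi2pi_int ex mulr1.
  by rewrite /expi2pi => -[].
move/eqP; rewrite !mulf_eq0 pnatr_eq0 /= (negbTE (lt0r_neq0 (@pi_gt0 R))) /=.
by rewrite subr_eq0 => /eqP ->; rewrite intr_int.
Qed.
End Expi2pi.

Lemma det_commutator (R : comUnitRingType) k (a b : 'M[R]_k) :
  a \in unitmx -> b \in unitmx -> \det (a *m b *m invmx a *m invmx b) = 1.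
Proof.
move=> ua ub; rewrite !det_mulmx !det_inv mulrAC mulrK -?unitmxE //.
by rewrite divrr -?unitmxE.
Qed.

Section Intertwiners.
Variables (F : fieldType) (k n : nat).
Implicit Types (W : 'M[F]_(k, n)) (M N : 'M[F]_n) (a b : 'M[F]_k).

Lemma intertwinerM W M N a b :
  W *m M = a *m W -> W *m N = b *m W -> W *m (M *m N) = a *m b *m W.
Proof. by move=> hM hN; rewrite mulmxA hM -mulmxA hN mulmxA. Qed.

Lemma intertwinerV W M a : M \in unitmx -> a \in unitmx ->
  W *m M = a *m W -> W *m invmx M = invmx a *m W.
Proof.
move=> uM ua hM.
by rewrite -[invmx a *m W](mulmxK uM) -(mulmxA _ W) hM mulmxA mulVmx // mul1mx.
Qed.

Lemma intertwiner_commutator W M N a b :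
  M \in unitmx -> N \in unitmx -> a \in unitmx -> b \in unitmx ->
  W *m M = a *m W -> W *m N = b *m W ->
  W *m (M *m N *m invmx M *m invmx N) = a *m b *m invmx a *m invmx b *m W.
Proof.
move=> uM uN ua ub hM hN.
apply: intertwinerM; last exact: intertwinerV.
apply: intertwinerM; last exact: intertwinerV.
exact: intertwinerM.
Qed.

Lemma stablemx_intertwiner W M : row_free W -> stablemx W M -> M \in unitmx ->
  exists2 a, a \in unitmx & W *m M = a *m W.
Proof.
move=> freeW /submxP[a ha] uM; exists a => //.
rewrite -row_free_unit /row_free eqn_leq rank_leq_row /=.
have rkWM : \rank (W *m M) = k by rewrite mxrankMfree ?row_free_unit // (eqP freeW).
by rewrite -[X in (X <= _)%N]rkWM ha mxrankM_maxl.
Qed.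

(* A row-free X with X D = psi X spans a psi-stable copy of a coordinate
   subspace: selecting k independent columns of X turns the relation into
   D' Y = Y psi^T for an invertible Y and a diagonal D' extracted from D. *)
Lemma intertwiner_diag_det (X : 'M[F]_(k, n)) (d : 'rV[F]_n) (psi : 'M[F]_k) :
  row_free X -> X *m diag_mx d = psi *m X ->
  exists2 f : 'I_k -> 'I_n, injective f & \prod_i d 0 (f i) = \det psi.
Proof.
move=> freeX hX.
have fullXt : row_full X^T by rewrite /row_full mxrank_tr.
pose f := fullrankfun fullXt; pose Y := rowsub f X^T.
exists f; first exact: fullrankfun_inj.
have detY : \det Y != 0 by rewrite -unitfE -unitmxE fullrowsub_unit.
have DXt : diag_mx d *m X^T = X^T *m psi^T.
  by rewrite -[diag_mx d]tr_diag_mx -trmx_mul hX trmx_mul.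
have : rowsub f (diag_mx d *m X^T) = diag_mx (\row_i d 0 (f i)) *m Y.
  by apply/matrixP => i j; rewrite !mul_diag_mx !mxE.
move/(congr1 determinant); rewrite DXt -mul_rowsub_mx !det_mulmx det_tr det_diag.
under eq_bigr do rewrite mxE.
by rewrite mulrC => /(mulIf detY).
Qed.

End Intertwiners.

Section ClassCycle.
Variables (T : eqType) (n : nat) (c : 'I_n -> T).

(* The next larger index of the same colour, wrapping around to the smallest. *)
Definition class_succ (i : 'I_n) : 'I_n :=
  if [pick j | (c j == c i) && (i < j)%N] is Some j0
  then arg_min j0 (fun j => (c j == c i) && (i < j)%N) val
  else arg_min i (fun j => c j == c i) val.

Variant class_succ_spec (i : 'I_n) : 'I_n -> Prop :=
| ClassSuccUp j of c j = c i & (i < j)%N &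
    (forall l, c l = c i -> (i < l)%N -> (j <= l)%N) : class_succ_spec i j
| ClassSuccWrap j of c j = c i & (forall l, c l = c i -> (l <= i)%N) &
    (forall l, c l = c i -> (j <= l)%N) : class_succ_spec i j.

Lemma class_succP i : class_succ_spec i (class_succ i).
Proof.
rewrite /class_succ; case: pickP => [j0 j0P | none_up].
  case: arg_minnP => // j /andP[/eqP cj ij] jmin.
  by apply: ClassSuccUp => // l /eqP cl il; apply: jmin; rewrite cl il.
case: arg_minnP => [//|j /eqP cj jmin].
apply: ClassSuccWrap => // [l cl|l /eqP cl]; last exact: jmin.
by have := none_up l; rewrite cl eqxx /= => /negbT; rewrite -leqNgt.
Qed.

Lemma class_succ_class i : c (class_succ i) = c i.
Proof. by case: class_succP. Qed.

Lemma class_succ_inj : injective class_succ.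
Proof.
move=> i1 i2 succ12.
have c12 : c i2 = c i1 by rewrite -class_succ_class -succ12 class_succ_class.
apply: val_inj; apply/eqP; rewrite eqn_leq; move: succ12.
case: class_succP => j _ a2 a3; case: class_succP => j' _ b2 b3 jj'; subst j'.
- apply/andP; split; rewrite leqNgt; apply/negP => lt12.
    by have := b3 _ (esym c12) lt12; rewrite leqNgt a2.
  by have := a3 _ c12 lt12; rewrite leqNgt b2.
- by have := b3 _ (esym c12); rewrite leqNgt a2.
- by have := a3 _ c12; rewrite leqNgt b2.
- by rewrite b2 // a2.
Qed.

Definition class_cycle : {perm 'I_n} := perm class_succ_inj.

Lemma class_cycleE i : class_cycle i = class_succ i.
Proof. exact: permE. Qed.

Variables (R : comPzRingType) (t : 'I_n -> R).
Hypothesis prod_class1 : forall i, \prod_(j | c j == c i) t j = 1.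

Definition class_prefix_prod (i : 'I_n) : R :=
  \prod_(j | (c j == c i) && (j < i)%N) t j.

(* Prefix products telescope along the cycle; at the wrap-around step the
   full class product 1 is used. *)
Lemma class_prefix_prod_succ i :
  class_prefix_prod (class_succ i) = t i * class_prefix_prod i.
Proof.
rewrite /class_prefix_prod class_succ_class; case: class_succP => j cj ij jmin.
  rewrite (bigD1 i) ?eqxx //=; congr (_ * _); apply: eq_bigl => l.
  case: (c l =P c i) => //= cl.
  case: (ltngtP l i) => [li|il|/val_inj ->].
  - by rewrite (ltn_trans li ij) neq_ltn li.
  - by rewrite ltnNge (jmin _ cl il).
  - by rewrite eqxx andbF.
rewrite big_pred0 => [|l]; last by case: (c l =P c i) => //= cl; rewrite ltnNge jmin.
rewrite -[LHS](prod_class1 i) (bigD1 i) ?eqxx //=; congr (_ * _); apply: eq_bigl => l.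
by case: (c l =P c i) => //= cl; rewrite ltn_neqAle ij // andbT.
Qed.

End ClassCycle.

Section DiagonalMatrices.
Variables (F : fieldType) (n : nat).

Lemma invmx_diag (d : 'I_n -> F) : (forall j, d j != 0) ->
  invmx (diag_mx (\row_j d j)) = diag_mx (\row_j (d j)^-1).
Proof.
move=> d_neq0.
have dK : diag_mx (\row_j d j) *m diag_mx (\row_j (d j)^-1) = 1%:M.
  by rewrite mulmx_diag; apply/matrixP => i j; rewrite !mxE divff.
have [ud _] := mulmx1_unit dK.
by rewrite -[invmx _]mulmx1 -dK mulmxA mulVmx // mul1mx.
Qed.

(* Conjugating a diagonal matrix by a permutation matrix permutes its entries,
   so the commutator is diagonal with entries d (s i) / d i. *)
Lemma commutator_perm_diag (s : {perm 'I_n}) (d t : 'I_n -> F) :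
  (forall j, d j != 0) -> (forall i, d (s i) = t i * d i) ->
  let P := perm_mx s in let D := diag_mx (\row_j d j) in
  P *m D *m invmx P *m invmx D = diag_mx (\row_i t i).
Proof.
move=> d_neq0 d_s P D.
have PD : P *m D = diag_mx (\row_i d (s i)) *m P.
  apply/matrixP => i j; rewrite mul_mx_diag mul_diag_mx !mxE.
  by case: eqP => [<-|]; rewrite ?mulr1 ?mul1r ?mulr0 ?mul0r.
rewrite PD -(mulmxA _ P) mulmxV ?unitmx_perm // mulmx1 invmx_diag // mulmx_diag.
by apply/matrixP => i j; rewrite !mxE d_s mulfK.
Qed.

Definition indicator_mx (S : {set 'I_n}) : 'M[F]_n := diag_mx (\row_j (j \in S)%:R).

Lemma stablemx_indicator (S : {set 'I_n}) (M : 'M[F]_n) :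
  (forall i j, i \in S -> j \notin S -> M i j = 0) -> stablemx (indicator_mx S) M.
Proof.
move=> M_block; set W := indicator_mx S.
suff -> : W *m M = W *m M *m W by apply: submxMl.
apply/matrixP => i j; rewrite /W mul_mx_diag mul_diag_mx !mxE.
case: (boolP (i \in S)) => iS; case: (boolP (j \in S)) => jS;
  rewrite ?mul0r ?mulr1 ?mul1r ?mulr0 //.
by rewrite M_block.
Qed.

Lemma indicator_mx_rank_proper (S : {set 'I_n}) :
  (0 < #|S| < n)%N -> (0 < \rank (indicator_mx S) < n)%N.
Proof.
case/andP=> /card_gt0P[i iS] ltSn; apply/andP; split.
  rewrite lt0n mxrank_eq0; apply/eqP => /matrixP/(_ i i).
  by rewrite !mxE iS eqxx /=; apply/eqP; rewrite oner_eq0.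
rewrite ltn_neqAle rank_leq_row andbT.
change (~~ row_free (indicator_mx S)); rewrite row_free_unit unitmxE det_diag.
have : (0 < #|~: S|)%N by rewrite -(ltn_add2l #|S|) addn0 cardsC card_ord.
case/card_gt0P => j; rewrite finset.in_setC => jS.
by rewrite (bigD1 j) //= mxE (negbTE jS) mul0r unitr0.
Qed.
End DiagonalMatrices.

Section Unitary.
Variables (R : rcfType) (n : nat).
Implicit Types (M : 'M[complex R]_n) (s : {perm 'I_n}).

Lemma unitary_unit M : unitary M -> M \in unitmx.
Proof. by case/mulmx1_unit. Qed.

Lemma adjmx_perm s : adjmx (perm_mx s : 'M[complex R]_n) = perm_mx s^-1.
Proof.
apply/matrixP => i j; rewrite !mxE conjC_nat.
suff -> : (s j == i) = (s^-1%g i == j) by [].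
by apply/idP/idP => /eqP <-; rewrite ?permK ?permKV eqxx.
Qed.

Lemma unitary_perm s : unitary (perm_mx s : 'M[complex R]_n).
Proof. by rewrite /unitary adjmx_perm -perm_mxM mulgV perm_mx1. Qed.

Lemma unitary1 : unitary (1%:M : 'M[complex R]_n).
Proof. by rewrite -perm_mx1; apply: unitary_perm. Qed.

Lemma adjmx1 : adjmx (1%:M : 'M[complex R]_n) = 1%:M.
Proof. by rewrite -perm_mx1 adjmx_perm invg1. Qed.

Lemma unitary_diag (d : 'I_n -> complex R) :
  (forall j, d j * (d j)^* = 1) -> unitary (diag_mx (\row_j d j)).
Proof.
move=> d_unit; rewrite /unitary.
have -> : adjmx (diag_mx (\row_j d j)) = diag_mx (\row_j (d j)^*).
  apply/matrixP => i j; rewrite !mxE eq_sym.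
  by case: eqP => [->|]; rewrite ?mulr1n ?mulr0n ?conjC0.
by rewrite mulmx_diag; apply/matrixP => i j; rewrite !mxE d_unit.
Qed.

End Unitary.

Lemma Psi_tilde_restrict (R : rcfType) n g (A B : 'I_g -> 'M[complex R]_n)
    (V : 'M[complex R]_n) :
  is_rep A B -> (forall i, stablemx V (A i) /\ stablemx V (B i)) ->
  exists2 psi : 'M[complex R]_(\rank V),
    row_base V *m Psi_tilde A B = psi *m row_base V & \det psi = 1.
Proof.
move=> repAB stV; set W := row_base V.
have restrict M : unitary M -> stablemx V M -> exists2 a, a \in unitmx & W *m M = a *m W.
  move=> uM sM; apply: stablemx_intertwiner; rewrite ?unitary_unit //.
    exact: row_base_free.
  by rewrite stablemx_row_base.
apply: (big_ind (fun X => exists2 psi, W *m X = psi *m W & \det psi = 1)).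
- by exists 1%:M; rewrite ?mulmx1 ?mul1mx ?det1.
- move=> X Y [p hp dp] [q hq dq]; exists (p *m q); first exact: intertwinerM.
  by rewrite det_mulmx dp dq mulr1.
- move=> i _; have [uA uB] := repAB i; have [sA sB] := stV i.
  have [a ua ha] := restrict _ uA sA; have [b ub hb] := restrict _ uB sB.
  exists (a *m b *m invmx a *m invmx b); last exact: det_commutator.
  exact: intertwiner_commutator (unitary_unit uA) (unitary_unit uB) ua ub ha hb.
Qed.

Lemma reducible_critical_subsum (R : realType) g n (gam : 'I_n -> R)
    (A B : 'I_g -> 'M[complex R]_n) (U : 'M[complex R]_n) :
  is_rep A B -> reducible_rep A B -> unitary U ->
  U *m diag_exp gam *m adjmx U = Psi_tilde A B ->
  exists S : {set 'I_n}, (0 < #|S| < n)%N /\ (\sum_(j in S) gam j) \is a Num.int.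
Proof.
move=> repAB [V [rkV_gt0 [rkV_ltn stV]]] uU UDU.
have [psi Wpsi det_psi] := Psi_tilde_restrict repAB stV.
set X := row_base V *m U.
have XD : X *m diag_mx (\row_j expi2pi (gam j)) = psi *m X.
  rewrite -diag_expE /X -[_ *m diag_exp gam]mulmx1 -(mulmx1C uU).
  by rewrite !mulmxA -(mulmxA _ U) -(mulmxA _ (U *m _)) UDU Wpsi !mulmxA.
have freeX : row_free X.
  rewrite /row_free mxrankMfree ?row_free_unit ?unitary_unit //; exact: row_base_free.
have [f injf prod_f] := intertwiner_diag_det freeX XD.
exists (f @: [set: 'I_(\rank V)]); rewrite card_imset // cardsT card_ord rkV_gt0 rkV_ltn.
split=> //; rewrite -expi2pi_eq1 big_imset /=; last by move=> i j _ _ /injf.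
rewrite (eq_bigl xpredT) => [|i]; last by rewrite finset.in_setT.
rewrite expi2pi_sum; apply/eqP; rewrite -[RHS]det_psi -prod_f.
by apply: eq_bigr => i _; rewrite mxE.
Qed.

Lemma commutator_class_diag (R : rcfType) n (S : {set 'I_n}) (t : 'I_n -> complex R) :
  (forall j, t j * (t j)^* = 1) ->
  \prod_(j in S) t j = 1 -> \prod_(j in ~: S) t j = 1 ->
  exists P D : 'M[complex R]_n, [/\ unitary P, unitary D,
    stablemx (indicator_mx _ S) P, stablemx (indicator_mx _ S) D &
    commmx P D = diag_mx (\row_j t j)].
Proof.
move=> t_unit tS tSc.
pose c j := j \in S.
have class1 i : \prod_(j | c j == c i) t j = 1.
  rewrite /c; case: (boolP (i \in S)) => iS; [rewrite -[RHS]tS | rewrite -[RHS]tSc].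
    by apply: eq_bigl => j; rewrite eqb_id.
  by apply: eq_bigl => j; rewrite eqbF_neg finset.in_setC.
pose s := class_cycle c; pose d := class_prefix_prod c t.
have d_unit j : d j * (d j)^* = 1.
  by rewrite /d /class_prefix_prod rmorph_prod -big_split big1 // => l _; apply: t_unit.
have d_neq0 j : d j != 0.
  by apply/eqP => d0; move: (d_unit j); rewrite d0 mul0r => /eqP; rewrite eq_sym oner_eq0.
have s_class i : (s i \in S) = (i \in S).
  by rewrite class_cycleE; apply: (class_succ_class c).
exists (perm_mx s), (diag_mx (\row_j d j)); split.
- exact: unitary_perm.
- exact: unitary_diag.
- apply: stablemx_indicator => i j iS jS; rewrite !mxE.
  by case: eqP => // sij; move: jS; rewrite -sij s_class iS.
- apply: stablemx_indicator => i j iS jS; rewrite mxE.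
  by case: eqP => // ij; move: jS; rewrite -ij iS.
- apply: commutator_perm_diag => // i.
  by rewrite /d /s class_cycleE; apply: class_prefix_prod_succ.
Qed.

Lemma critical_value_of_subsum (R : realType) g n (gam : 'I_n -> R) (S : {set 'I_n}) :
  (0 < g)%N -> \det (diag_exp gam) = 1 ->
  (0 < #|S| < n)%N -> (\sum_(j in S) gam j) \is a Num.int ->
  exists (A B : 'I_g -> 'M[complex R]_n) (U : 'M[complex R]_n),
    is_rep A B /\ reducible_rep A B /\ unitary U /\
    U *m diag_exp gam *m adjmx U = Psi_tilde A B.
Proof.
case: g => // g _ det1 S_proper S_int.
pose t j := expi2pi (gam j).
have tS : \prod_(j in S) t j = 1 by apply/eqP; rewrite -expi2pi_sum expi2pi_eq1.
have tT : \prod_j t j = 1.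
  by rewrite -[RHS]det1 diag_expE det_diag; apply: eq_bigr => j _; rewrite mxE.
have tSc : \prod_(j in ~: S) t j = 1.
  move: tT; rewrite (bigID (mem S)) /= tS mul1r; apply: etrans.
  by apply: eq_bigl => j; rewrite finset.in_setC.
have [P [D [uP uD sP sD PD]]] := commutator_class_diag (fun j => expi2pi_conjK (gam j)) tS tSc.
exists (fun i => if i == ord0 then P else 1%:M), (fun=> D), 1%:M.
split; [|split; [|split]].
- by move=> i; split=> //; case: ifP => _ //; apply: unitary1.
- exists (indicator_mx _ S).
  have /andP[rk_gt0 rk_ltn] := indicator_mx_rank_proper (complex R) S_proper.
  split=> //; split=> // i; split=> //.
  by case: ifP => _ //; rewrite /= mulmx1.
- exact: unitary1.
rewrite adjmx1 mulmx1 mul1mx /Psi_tilde big_ord_recl eqxx PD.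
have -> : \big[mulmx/1%:M]_(i < g) commmx (if lift ord0 i == ord0 then P else 1%:M) D = 1%:M.
  apply: (big_ind (eq^~ 1%:M)) => // [X Y -> ->|i _]; first by rewrite mulmx1.
  rewrite eq_sym (negbTE (neq_lift _ _)) /commmx invmx1 mul1mx mulmx1 mulmxV //.
  exact: unitary_unit.
by rewrite mulmx1.
Qed.

Unset Implicit Arguments.

Theorem mainTheorem4 (R : realType) (g n : nat) (gam : 'I_n -> R) :
  (1 <= g)%N ->
  (forall j, 0 <= gam j < 1) ->
  \det (diag_exp gam) = 1 ->
  (exists (A B : 'I_g -> 'M[complex R]_n) (U : 'M[complex R]_n),
      is_rep A B /\ reducible_rep A B /\ unitary U /\
      U *m diag_exp gam *m adjmx U = Psi_tilde A B)
  <->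
  (exists S : {set 'I_n}, (0 < #|S| < n)%N /\
      (\sum_(j in S) gam j) \is a Num.int).
Proof.
move=> g_gt0 _ det1; split.
  case=> A [B [U [repAB [redAB [uU UDU]]]]].
  exact: reducible_critical_subsum repAB redAB uU UDU.
by case=> S [S_proper S_int]; exact: critical_value_of_subsum g_gt0 det1 S_proper S_int.
Qed.
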